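(* Let $X=\Sigma_P$ be a one-sided subshift on an at most countable alphabet $S$ with transition matrix $P$, let $p:X\to\mathbb{R}$ be a function, $\mathcal{C}\subset\Sigma_P^*$ and $\eta>0$. Let $\varphi_1,\varphi_2:X\to\mathbb{R}_{>0}$ be bounded and bounded away from zero, with $-\infty<\mathcal{P}_{\varphi_i}(p,\mathcal{C})<0$ for $i=1,2$. Then \[\frac{1}{\mathcal{P}_{\varphi_1+\varphi_2}(p,\mathcal{C})}\ge\frac{1}{\mathcal{P}_{\varphi_1}(p,\mathcal{C})}+\frac{1}{\mathcal{P}_{\varphi_2}(p,\mathcal{C})}.\]
   Context: $\Sigma_P=\{x\in S^{\mathbb{N}}:p_{x_i,x_{i+1}}\ne0\ \forall i\}$ with the shift $\theta$; $\Sigma_P^*$ is the set of finite admissible words, $|w|$ the length and $[w]$ the cylinder of $w$. For $f:X\to\mathbb{R}$, $S_wf=\sup_{x\in[w]}\sum_{k=0}^{|w|-1}f\circ\theta^k(x)$. For $\varphi\ge0$, the $\varphi$-induced pressure of $p$ with respect to $\mathcal{C}$ is $\mathcal{P}_\varphi(p,\mathcal{C})=\limsup_{t\to\infty}\frac1t\log\sum_{w\in\mathcal{C},\,t-\eta<S_w\varphi\le t}\exp(S_wp)$. *)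

From HB Require Import structures.
From mathcomp Require Import all_boot all_order all_algebra.
From mathcomp Require Import all_classical all_reals all_analysis.
Set Implicit Arguments. Unset Strict Implicit. Unset Printing Implicit Defensive.
Import Order.TTheory GRing.Theory Num.Theory.
Local Open Scope classical_set_scope.
Local Open Scope ring_scope.

Section Shift.
Variable (R : realType) (S : countType).

(* The transition matrix is given by its admissibility pattern:
   P a b = true  iff  p_{a,b} <> 0. *)

Definition SigmaP (P : S -> S -> bool) : set (nat -> S) :=
  [set x | forall i, P (x i) (x i.+1)].

Definition shift (x : nat -> S) : nat -> S := fun n => x n.+1.

Definition admissible (P : S -> S -> bool) (w : seq S) : bool :=
  if w is a :: w' then path P a w' else false.

Definition cylinder (P : S -> S -> bool) (w : seq S) : set (nat -> S) :=
  [set x | SigmaP P x /\ forall i, (i < size w)%N -> x i = nth (x i) w i].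

Definition Sw (P : S -> S -> bool) (f : (nat -> S) -> R) (w : seq S) : \bar R :=
  ereal_sup [set (\sum_(k < size w) f (iter k shift x))%:E | x in cylinder P w].

Definition induced_sum (P : S -> S -> bool) (eta : R) (phi p : (nat -> S) -> R)
    (C : set (seq S)) (t : R) : \bar R :=
  \esum_(w in [set w | C w /\ ((t - eta)%:E < Sw P phi w)%E /\ (Sw P phi w <= t%:E)%E])
     expeR (Sw P p w).

Definition induced_pressure (P : S -> S -> bool) (eta : R) (phi p : (nat -> S) -> R)
    (C : set (seq S)) : \bar R :=
  ereal_inf [set ereal_sup [set ((t^-1)%:E * lne (induced_sum P eta phi p C t))%E
                            | t in [set t : R | T <= t /\ 0 < t]]
            | T in [set: R]].

End Shift.

From Pilot Require Import Defs.
From HB Require Import structures.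
From mathcomp Require Import all_boot all_order all_algebra.
From mathcomp Require Import all_classical all_reals all_analysis.
From mathcomp Require Import ring lra.
Set Implicit Arguments. Unset Strict Implicit. Unset Printing Implicit Defensive.
Import Order.TTheory GRing.Theory Num.Theory.
Local Open Scope classical_set_scope.
Local Open Scope ring_scope.

(* Write Z_phi(t) for the sum of exp (S_w p) over the words w of C with
   t - eta < S_w phi <= t, so that P_phi is the exponential growth rate of Z_phi,
   and put phi = phi1 + phi2.  For every word S_w phi <= S_w phi1 + S_w phi2,
   and each S_w phi_i lies between S_w phi and a fixed positive multiple of it.
   Hence a word of the phi-window at t lies in a phi1-window at some k eta and
   in a phi2-window at some j eta with (k + j) eta >= t - eta, and only O(t^2)
   pairs (k, j) occur.  If P_phi_i < x_i < 0, the words of the pair (k, j) have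
   mass at most min (e^(x1 k eta), e^(x2 j eta)) <= e^(d (k + j) eta) with
   d = x1 x2 / (x1 + x2), because d (K + J) is a convex combination of x1 K and
   x2 J.  Thus P_phi <= d, and letting x_i tend to P_phi_i gives
   P_phi <= P_phi1 P_phi2 / (P_phi1 + P_phi2), which is the claim.  The same
   comparison and a pigeonhole over levels show that P_phi > -oo. *)

Section exp_growth_rate.
Variable R : realType.

Definition exp_growth_rate (Z : R -> \bar R) : \bar R :=
  ereal_inf [set ereal_sup [set ((t^-1)%:E * lne (Z t))%E
                            | t in [set t : R | T <= t /\ 0 < t]] | T in [set: R]].

Lemma lne_rate_leE (t x : R) (s : \bar R) : 0 < t -> (0 <= s)%E ->
  ((t^-1)%:E * lne s <= x%:E)%E = (s <= (expR (x * t))%:E)%E.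
Proof.
move=> t_gt0; case: s => [r| |] //= r_ge0; last first.
  by rewrite gt0_muley ?lte_fin ?invr_gt0 // !leye_eq.
rewrite lee_fin in r_ge0; case: ifPn => [r_le0|].
  have -> : r = 0 by apply/eqP; rewrite eq_le r_le0 r_ge0.
  by rewrite gt0_muleNy ?lte_fin ?invr_gt0 // leNye lee_fin expR_ge0.
rewrite -ltNge => r_gt0.
by rewrite -EFinM !lee_fin ler_pdivrMl // -ler_expR lnK ?posrE // mulrC.
Qed.

Lemma lne_rate_geE (t x : R) (s : \bar R) : 0 < t -> (0 <= s)%E ->
  (x%:E <= (t^-1)%:E * lne s)%E = ((expR (x * t))%:E <= s)%E.
Proof.
move=> t_gt0; case: s => [r| |] //= r_ge0; last first.
  by rewrite gt0_muley ?lte_fin ?invr_gt0 // !leey.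
rewrite lee_fin in r_ge0; case: ifPn => [r_le0|].
  have -> : r = 0 by apply/eqP; rewrite eq_le r_le0 r_ge0.
  rewrite gt0_muleNy ?lte_fin ?invr_gt0 // leeNy_eq lee_fin.
  by apply/esym/negbTE; rewrite -ltNge expR_gt0.
rewrite -ltNge => r_gt0.
by rewrite -EFinM !lee_fin ler_pdivlMl // -ler_expR lnK ?posrE // mulrC.
Qed.

Variable Z : R -> \bar R.
Hypothesis Z_ge0 : forall t, (0 <= Z t)%E.

Lemma exp_growth_rate_lt x : (exp_growth_rate Z < x%:E)%E ->
  exists2 T, 0 < T & forall t, T <= t -> (Z t <= (expR (x * t))%:E)%E.
Proof.
move=> /ereal_inf_lt[_ [T _ <-] supT]; exists (Num.max T 1) => [|t].
  by rewrite lt_max ltr01 orbT.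
rewrite ge_max => /andP[Tt t_ge1].
rewrite -lne_rate_leE ?(lt_le_trans ltr01) //; apply/ltW/(le_lt_trans _ supT).
by apply: ereal_sup_ubound; exists t => //; split => //; exact: lt_le_trans t_ge1.
Qed.

Lemma exp_growth_rate_gt y : (y%:E < exp_growth_rate Z)%E ->
  forall T, exists t, [/\ T <= t, 0 < t & ((expR (y * t))%:E < Z t)%E].
Proof.
move=> y_lt T.
have /ereal_sup_gt[_ [t [Tt t_gt0] <-]] : (y%:E < ereal_sup
    [set (t^-1)%:E * lne (Z t) | t in [set t : R | (T <= t)%R /\ (0 < t)%R]])%E.
  by apply: lt_le_trans y_lt _; apply: ereal_inf_lbound; exists T.
by rewrite ltNge lne_rate_leE // -ltNge; exists t.
Qed.

Lemma exp_growth_rate_le x :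
    (exists T, forall t, T <= t -> 0 < t -> (Z t <= (expR (x * t))%:E)%E) ->
  (exp_growth_rate Z <= x%:E)%E.
Proof.
move=> [T ZT]; apply: le_trans (ereal_inf_lbound _) _; first by exists T.
by apply: ge_ereal_sup => _ [t [Tt t_gt0] <-]; rewrite lne_rate_leE // ZT.
Qed.

Lemma exp_growth_rate_ge y :
    (forall T, exists t, [/\ T <= t, 0 < t & ((expR (y * t))%:E <= Z t)%E]) ->
  (y%:E <= exp_growth_rate Z)%E.
Proof.
move=> ZT; apply: le_ereal_inf_tmp => _ [T _ <-].
have [t [Tt t_gt0 Zt]] := ZT T.
apply: le_trans (ereal_sup_ubound _); last by exists t.
by rewrite lne_rate_geE.
Qed.

End exp_growth_rate.

Section real_lemmas.
Variable R : realType.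

Lemma min_le_harmonic (x1 x2 K J : R) : x1 < 0 -> x2 < 0 ->
  Num.min (x1 * K) (x2 * J) <= x1 * x2 / (x1 + x2) * (K + J).
Proof.
move=> x1_lt0 x2_lt0; have s_lt0 : x1 + x2 < 0 by lra.
pose th := x2 / (x1 + x2).
have th_gt0 : 0 < th by rewrite ltr_ndivlMr // mul0r.
have th_lt1 : th < 1 by rewrite ltr_ndivrMr // mul1r; lra.
have -> : x1 * x2 / (x1 + x2) * (K + J) = th * (x1 * K) + (1 - th) * (x2 * J).
  by rewrite /th; field; rewrite lt_eqF.
by have := lexx (Num.min (x1 * K) (x2 * J)); rewrite le_min => /andP[? ?]; nra.
Qed.

Lemma level_exists (eta s : R) n : 0 < eta -> 0 < s <= n%:R * eta ->
  exists k : 'I_n.+1, k%:R * eta - eta < s <= k%:R * eta.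
Proof.
move=> eta_gt0; elim: n => [|n IHn] /andP[s_gt0 s_le].
  by move: s_le; rewrite mul0r => /(lt_le_trans s_gt0); rewrite ltxx.
have [s_len | s_gtn] := leP s (n%:R * eta).
  have [|k Hk] := IHn; first by rewrite s_gt0 s_len.
  by exists (widen_ord (leqnSn _) k).
by exists ord_max; rewrite /= s_le andbT -natr1 mulrDl mul1r addrK.
Qed.

Lemma level_count (eta t : R) : 0 < eta -> 0 <= t ->
  exists n : nat, t <= n%:R * eta /\ n.+1%:R <= t / eta + 2.
Proof.
move=> eta_gt0 t_ge0; exists (Num.truncn (t / eta)).+1; split.
  by rewrite -ler_pdivrMr //; apply/ltW/truncnS_gt.
have := truncn_le (t / eta); rewrite divr_ge0 ?(ltW eta_gt0) // -addn2 natrD.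
by lra.
Qed.

Lemma sqr_le_expR_eventually (a b K : R) : 0 < a -> 0 <= b ->
  exists T, forall t, T <= t -> K * (b * t + 2) ^+ 2 <= expR (a * t).
Proof.
(* With [u := 1 + a t / 3], eventually [b t + 2 <= B u], [K' B^2 <= u] and
   [u ^ 3 <= expR (a t)]. *)
move=> a_gt0 b_ge0.
pose B := Num.max (3 * b / a) 2; pose K' := Num.max K 0.
exists (Num.max 0 (3 * (K' * B ^+ 2) / a)) => t; rewrite ge_max => /andP[t_ge0 tK].
pose u := 1 + a * t / 3.
have K_le : K <= K' by rewrite le_max lexx.
have K'_ge0 : 0 <= K' by rewrite le_max lexx orbT.
have uK : K' * B ^+ 2 <= u.
  by move: tK; rewrite ler_pdivrMr // /u; lra.
have bu : b * t + 2 <= B * u.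
  have B1 : 3 * b / a <= B by rewrite le_max lexx.
  have B2 : 2 <= B by rewrite le_max lexx orbT.
  have -> : b * t = 3 * b / a * (a * t / 3) by field; rewrite gt_eqF.
  have : 0 <= a * t / 3 by rewrite divr_ge0 // mulr_ge0 // ltW.
  rewrite /u; nra.
have u_exp : u ^+ 3 <= expR (a * t).
  have -> : a * t = 3%:R * (a * t / 3) by field.
  rewrite expRM_natl; apply: lerXn2r; rewrite ?nnegrE ?expR_ge0 //.
    by rewrite /u addr_ge0 // divr_ge0 // mulr_ge0 // ltW.
  by rewrite /u expR_ge1Dx.
have bt_ge0 : 0 <= b * t + 2 by rewrite addr_ge0 ?mulr_ge0.
apply: le_trans u_exp; apply: le_trans (_ : K' * (B * u) ^+ 2 <= _).
  apply: le_trans (_ : K' * (b * t + 2) ^+ 2 <= _).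
    by apply: ler_wpM2r; rewrite ?exprn_ge0.
  by apply/ler_wpM2l/lerXn2r; rewrite // nnegrE (le_trans bt_ge0).
have u_ge0 : 0 <= u by rewrite /u addr_ge0 // divr_ge0 // mulr_ge0 // ltW.
rewrite exprMn mulrA; apply: le_trans (ler_wpM2r (exprn_ge0 2 u_ge0) uK) _.
by rewrite -exprS.
Qed.

Lemma expR_2rate_le (y eta t s N : R) : y < 0 -> t - eta <= s -> 0 <= N ->
  expR (- (2 * y) * eta) * N <= expR (- y * t) -> expR (2 * y * s) * N <= expR (y * t).
Proof.
move=> y_lt0 s_ge N_ge0 N_le.
apply: le_trans (_ : expR (2 * y * (t - eta)) * N <= _).
  by rewrite ler_wpM2r // ler_expR; nra.
have -> : expR (2 * y * (t - eta)) = expR (y * t) * expR (- (2 * y) * eta) * expR (y * t).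
  by rewrite -!expRD; congr expR; ring.
have e_inv : expR (- y * t) * expR (y * t) = 1 by rewrite -expRD mulNr addNr expR0.
move: e_inv N_le; set e := expR (y * t); set K := expR (- (2 * y) * eta) => e_inv N_le.
rewrite (_ : e * K * e * N = e * (K * N * e)); last by ring.
rewrite -[X in _ <= X]mulr1 ler_wpM2l ?expR_ge0 //.
by apply: le_trans (ler_wpM2r (expR_ge0 _) N_le) _; rewrite e_inv.
Qed.

Lemma harmonic_lt0 (x1 x2 : R) : x1 < 0 -> x2 < 0 -> x1 * x2 / (x1 + x2) < 0.
Proof. by move=> x1_lt0 x2_lt0; rewrite pmulr_rlt0 ?invr_lt0; nra. Qed.

Lemma harmonic_inv_le (q1 q2 r : R) : q1 < 0 -> q2 < 0 ->
  r <= q1 * q2 / (q1 + q2) -> q1^-1 + q2^-1 <= r^-1.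
Proof.
move=> q1_lt0 q2_lt0 r_le.
have D_lt0 := harmonic_lt0 q1_lt0 q2_lt0.
have -> : q1^-1 + q2^-1 = (q1 * q2 / (q1 + q2))^-1.
  by field; rewrite !lt_eqF //; lra.
by rewrite lef_nV2 // negrE //; apply: le_lt_trans D_lt0.
Qed.

Lemma lee_scale_lt1 (x : \bar R) (D : R) :
  (forall l, 0 < l < 1 -> (x <= (l * D)%:E)%E) -> (x <= D%:E)%E.
Proof.
move=> x_le; apply/lee_addgt0Pr => e e_gt0.
pose u := e / (2 * (`|D| + e)).
have De_gt0 : 0 < `|D| + e by rewrite ltr_pwDr.
have u_gt0 : 0 < u by rewrite divr_gt0 // mulr_gt0.
have uDe : u * (`|D| + e) = e / 2 by rewrite /u; field; rewrite gt_eqF.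
have u_lt1 : u < 1 by have := normr_ge0 D; nra.
apply: le_trans (x_le (1 - u) _) _; first by apply/andP; split; lra.
rewrite lee_fin; have := ler_norm (- D); rewrite normrN; nra.
Qed.

Lemma fin_lt0P (x : \bar R) : (-oo < x)%E -> (x < 0)%E -> exists2 q : R, x = q%:E & q < 0.
Proof. by case: x => [q| |] //= _; rewrite lte_fin => q_lt0; exists q. Qed.

Lemma inve_harmonic_le (q1 q2 : R) (x : \bar R) : q1 < 0 -> q2 < 0 ->
  (-oo < x)%E -> (x <= (q1 * q2 / (q1 + q2))%:E)%E ->
  (q1%:E^-1 + q2%:E^-1 <= x^-1)%E.
Proof.
move=> q1_lt0 q2_lt0; case: x => [r| |] // _; rewrite lee_fin => r_le.
have r_lt0 := le_lt_trans r_le (harmonic_lt0 q1_lt0 q2_lt0).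
by rewrite !inver !lt_eqF //= -EFinD lee_fin harmonic_inv_le.
Qed.

End real_lemmas.

Lemma le_esum_subset (R : realType) (T : choiceType) (A B : set T) (f : T -> \bar R) :
  A `<=` B -> (\esum_(i in A) f i <= \esum_(i in B) f i)%E.
Proof.
move=> AB; apply: ge_ereal_sup => _ [X [finX XA] <-].
by apply: ereal_sup_ubound; exists X => //; split => // x /XA /AB.
Qed.

Lemma exists_gt_of_sum_gt (R : realType) n (H : 'I_n.+1 -> \bar R) (x : R) :
  ((x *+ n.+1)%:E < \sum_(k < n.+1) H k)%E -> exists k, (x%:E < H k)%E.
Proof.
move=> sum_gt; apply: contrapT => no_gt; move: sum_gt; apply/negP; rewrite -leNgt.
apply: le_trans (_ : \sum_(k < n.+1) x%:E <= _)%E; last first.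
  by rewrite sumEFin sumr_const card_ord.
by apply: lee_sum => k _; rewrite leNgt; apply/negP => Hk; apply: no_gt; exists k.
Qed.

(* The induced pressure depends on the words of [C] only through their lengths
   [g w = S_w phi] and their weights [a w = exp (S_w p)]. *)
Section window.
Variables (R : realType) (W : choiceType) (a : W -> \bar R) (C : set W) (eta : R).
Hypotheses (a_ge0 : forall w, (0 <= a w)%E) (eta_gt0 : 0 < eta).

Definition window (g : W -> R) (t : R) : set W :=
  [set w | C w /\ t - eta < g w /\ g w <= t].

Definition window_sum (g : W -> R) (t : R) : \bar R := \esum_(w in window g t) a w.

Definition window_pressure (g : W -> R) : \bar R := exp_growth_rate (window_sum g).

Lemma window_sum_ge0 g t : (0 <= window_sum g t)%E.
Proof. exact: esum_ge0. Qed.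

Lemma esum_le_window_levels (A : set W) (h : W -> R) n :
  A `<=` C -> (forall w, A w -> 0 < h w <= n%:R * eta) ->
  (\esum_(w in A) a w <= \sum_(k < n.+1) \esum_(w in A `&` window h (k%:R * eta)) a w)%E.
Proof.
move=> AC h_bnd; under eq_bigr do rewrite esum_mkcondr.
rewrite -esum_sum; last by move=> w k _ _; case: ifP.
apply: le_esum => w Aw; have [k /andP[k_lt k_ge]] := level_exists eta_gt0 (h_bnd w Aw).
rewrite (bigD1 k) //= ifT; last by apply/mem_set; split; [exact: AC | split].
by rewrite leeDl // sume_ge0 // => i _; case: ifP.
Qed.

Lemma window_sum_transfer (g1 g : W -> R) (c t x : R) n :
  0 < c -> (forall w, C w -> c * g w <= g1 w <= g w) ->
  eta <= t -> t / c <= n%:R * eta -> 0 <= x ->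
  ((x *+ n.+1)%:E < window_sum g1 t)%E ->
  exists k : nat, t - eta < k%:R * eta /\ (x%:E < window_sum g (k%:R * eta))%E.
Proof.
(* Pigeonhole over the [n + 1] levels of [g] met by the [g1]-window at [t]. *)
move=> c_gt0 g1g t_ge n_ge x_ge0 sum_gt.
have g_bnd w : window g1 t w -> 0 < g w <= n%:R * eta.
  move=> [Cw [g1_gt g1_le]]; have /andP[cg_le g1_le_g] := g1g w Cw.
  apply/andP; split; first by lra.
  by apply: le_trans n_ge; rewrite ler_pdivlMr //; lra.
have [k k_gt] : exists k : 'I_n.+1,
    (x%:E < \esum_(w in window g1 t `&` window g (k%:R * eta)) a w)%E.
  apply: exists_gt_of_sum_gt; apply: lt_le_trans sum_gt _.
  by apply: esum_le_window_levels g_bnd => w [].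
have [[w [[Cw [g1_gt _]] [_ [_ g_le]]]]|/nonemptyPn empty] := pselect
    ((window g1 t `&` window g (k%:R * eta)) !=set0); last first.
  by move: k_gt; rewrite empty esum_set0 lte_fin ltNge x_ge0.
exists k; split; first by have /andP[_ ?] := g1g w Cw; lra.
by apply: lt_le_trans k_gt _; apply: le_esum_subset => ? [].
Qed.

Lemma window_pressure_gt_Ny (g1 g : W -> R) (c : R) :
  0 < c -> (forall w, C w -> c * g w <= g1 w <= g w) ->
  (-oo < window_pressure g1)%E -> (-oo < window_pressure g)%E.
Proof.
move=> c_gt0 g1g g1_gtNy.
have [y [y_lt0 y_lt]] : exists y, y < 0 /\ (y%:E < window_pressure g1)%E.
  move: g1_gtNy; case: (window_pressure g1) => [q| |] // _; last first.
    by exists (-1); rewrite ltry; lra.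
  exists (- `|q| - 1); rewrite lte_fin; have := ler_norm (- q); rewrite normrN.
  by have := normr_ge0 q; lra.
apply: lt_le_trans (ltNyr (2 * y)) _.
apply: exp_growth_rate_ge; first exact: window_sum_ge0.
move=> T; have [T0 T0_le] : exists T0, forall t, T0 <= t ->
    expR (- (2 * y) * eta) * ((c * eta)^-1 * t + 2) ^+ 2 <= expR (- y * t).
  by apply: sqr_le_expR_eventually; rewrite ?invr_ge0 ?mulr_ge0 ?ltW //; lra.
have [t [tT t_gt0 Zt]] :=
  exp_growth_rate_gt (window_sum_ge0 g1) y_lt (Num.max (T + eta) (Num.max T0 eta)).
move: tT; rewrite !ge_max => /andP[tT /andP[tT0 t_ge]].
have [n [n_ge n_le]] := level_count eta_gt0 (divr_ge0 (ltW t_gt0) (ltW c_gt0)).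
pose x := expR (y * t) / n.+1%:R.
have x_ge0 : 0 <= x by rewrite divr_ge0 ?expR_ge0.
have sum_gt : ((x *+ n.+1)%:E < window_sum g1 t)%E.
  by rewrite /x -mulr_natr divfK ?pnatr_eq0.
have [k [k_gt k_sum]] := window_sum_transfer c_gt0 g1g t_ge n_ge x_ge0 sum_gt.
exists (k%:R * eta); split; [lra | lra |].
apply: le_trans (ltW k_sum); rewrite lee_fin /x ler_pdivlMr ?ltr0n //.
apply: expR_2rate_le => //; first exact: ltW k_gt.
apply: le_trans (T0_le t tT0); apply: ler_wpM2l; first exact: expR_ge0.
have -> : (c * eta)^-1 * t = t / c / eta by field; rewrite !gt_eqF.
have u_ge1 : 1 <= t / c / eta + 2 by apply: le_trans n_le; rewrite ler1n.
by apply: le_trans n_le _; rewrite expr2 ler_peMr // (le_trans ler01).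
Qed.

Lemma window_block_le (g1 g2 g : W -> R) (x1 x2 T1 T2 t : R) (k j : nat) :
  x1 < 0 -> x2 < 0 -> 0 < T1 -> 0 < T2 ->
  (forall s, T1 <= s -> (window_sum g1 s <= (expR (x1 * s))%:E)%E) ->
  (forall s, T2 <= s -> (window_sum g2 s <= (expR (x2 * s))%:E)%E) ->
  (forall w, window g t w -> [/\ T1 <= g1 w, T2 <= g2 w & g w <= g1 w + g2 w]) ->
  (\esum_(w in window g t `&` window g1 (k%:R * eta) `&` window g2 (j%:R * eta)) a w
     <= (expR (x1 * x2 / (x1 + x2) * (t - eta)))%:E)%E.
Proof.
move=> x1_lt0 x2_lt0 T1_gt0 T2_gt0 sum1_le sum2_le g_bnd.
set block := _ `&` _ `&` _.
have [[w [[gw [_ [_ g1_le]]] [_ [_ g2_le]]]]|/nonemptyPn->] := pselect (block !=set0);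
  last by rewrite esum_set0 lee_fin expR_ge0.
have [T1_le T2_le g_le] := g_bnd w gw; case: gw => _ [g_gt _].
have block_le1 : (\esum_(w in block) a w <= (expR (x1 * (k%:R * eta)))%:E)%E.
  by apply: le_trans (sum1_le _ _); [apply: le_esum_subset => ? [[_ ?]] | lra].
have block_le2 : (\esum_(w in block) a w <= (expR (x2 * (j%:R * eta)))%:E)%E.
  by apply: le_trans (sum2_le _ _); [apply: le_esum_subset => ? [_ ?] | lra].
have d_le : x1 * x2 / (x1 + x2) * (k%:R * eta + j%:R * eta)
    <= x1 * x2 / (x1 + x2) * (t - eta).
  by rewrite ler_wnM2l ?(ltW (harmonic_lt0 x1_lt0 x2_lt0)) //; lra.
have := min_le_harmonic (k%:R * eta) (j%:R * eta) x1_lt0 x2_lt0.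
rewrite ge_min => /orP[x1_le|x2_le].
  by apply: le_trans block_le1 _; rewrite lee_fin ler_expR (le_trans x1_le).
by apply: le_trans block_le2 _; rewrite lee_fin ler_expR (le_trans x2_le).
Qed.

Lemma window_sum_le_blocks (g1 g2 g : W -> R) (t B : R) n :
  (forall w, window g t w -> 0 < g1 w <= n%:R * eta /\ 0 < g2 w <= n%:R * eta) ->
  (forall k j : nat,
    (\esum_(w in window g t `&` window g1 (k%:R * eta) `&` window g2 (j%:R * eta)) a w
       <= B%:E)%E) ->
  (window_sum g t <= (B *+ n.+1 *+ n.+1)%:E)%E.
Proof.
move=> g_bnd block_le.
apply: le_trans (esum_le_window_levels (h := g1) (n := n) _ _) _.
- by move=> w [].
- by move=> w /g_bnd[].
apply: le_trans (_ : \sum_(k < n.+1) (B *+ n.+1)%:E <= _)%E; last first.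
  by rewrite sumEFin sumr_const card_ord.
apply: lee_sum => k _; apply: le_trans (esum_le_window_levels (h := g2) (n := n) _ _) _.
- by move=> w [[]].
- by move=> w [/g_bnd[]].
apply: le_trans (_ : \sum_(j < n.+1) B%:E <= _)%E; last first.
  by rewrite sumEFin sumr_const card_ord.
by apply: lee_sum => j _; exact: block_le.
Qed.

Lemma window_sum_le_harmonic (g1 g2 g : W -> R) (c x1 x2 T1 T2 t : R) n : 0 < c ->
  (forall w, C w -> c * g w <= g1 w <= g w) ->
  (forall w, C w -> c * g w <= g2 w <= g w) ->
  (forall w, C w -> g w <= g1 w + g2 w) ->
  x1 < 0 -> x2 < 0 -> 0 < T1 -> 0 < T2 ->
  (forall s, T1 <= s -> (window_sum g1 s <= (expR (x1 * s))%:E)%E) ->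
  (forall s, T2 <= s -> (window_sum g2 s <= (expR (x2 * s))%:E)%E) ->
  T1 <= c * (t - eta) -> T2 <= c * (t - eta) -> t <= n%:R * eta ->
  (window_sum g t <= (expR (x1 * x2 / (x1 + x2) * (t - eta)) *+ n.+1 *+ n.+1)%:E)%E.
Proof.
move=> c_gt0 g1g g2g g_le_sum x1_lt0 x2_lt0 T1_gt0 T2_gt0 sum1_le sum2_le cT1 cT2 n_ge.
have g_bnd w : window g t w ->
    [/\ T1 <= g1 w, T2 <= g2 w, g1 w <= n%:R * eta & g2 w <= n%:R * eta].
  move=> [Cw [g_gt g_le]]; have /andP[cg1 g1_le] := g1g w Cw.
  have /andP[cg2 g2_le] := g2g w Cw.
  have ctg : c * (t - eta) <= c * g w by rewrite ler_pM2l // ltW.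
  have t_le := le_trans g_le n_ge.
  split; [exact: le_trans cT1 (le_trans ctg cg1) | exact: le_trans cT2 (le_trans ctg cg2)
         | exact: le_trans g1_le t_le | exact: le_trans g2_le t_le].
apply: (window_sum_le_blocks (g1 := g1) (g2 := g2)) => [w /g_bnd[T1g T2g ? ?] | k j].
  by rewrite (lt_le_trans T1_gt0 T1g) (lt_le_trans T2_gt0 T2g).
apply: (window_block_le (T1 := T1) (T2 := T2)) => // w gw.
have [T1g T2g _ _] := g_bnd w gw.
by case: gw => Cw _; split => //; exact: g_le_sum.
Qed.

Lemma window_pressure_le_harmonic (g1 g2 g : W -> R) (c x1 x2 : R) : 0 < c ->
  (forall w, C w -> c * g w <= g1 w <= g w) ->
  (forall w, C w -> c * g w <= g2 w <= g w) ->
  (forall w, C w -> g w <= g1 w + g2 w) ->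
  x1 < 0 -> x2 < 0 ->
  (window_pressure g1 < x1%:E)%E -> (window_pressure g2 < x2%:E)%E ->
  (window_pressure g <= (x1 * x2 / (x1 + x2))%:E)%E.
Proof.
move=> c_gt0 g1g g2g g_le_sum x1_lt0 x2_lt0.
move=> /(exp_growth_rate_lt (window_sum_ge0 g1))[T1 T1_gt0 sum1_le].
move=> /(exp_growth_rate_lt (window_sum_ge0 g2))[T2 T2_gt0 sum2_le].
set d := x1 * x2 / (x1 + x2).
apply/lee_addgt0Pr => del del_gt0; apply: exp_growth_rate_le; first exact: window_sum_ge0.
have [T0 T0_le] : exists T0, forall t, T0 <= t ->
    expR (- d * eta) * (eta^-1 * t + 2) ^+ 2 <= expR (del * t).
  by apply: sqr_le_expR_eventually; rewrite // invr_ge0 ltW.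
exists (Num.max T0 (eta + Num.max T1 T2 / c)) => t.
rewrite !ge_max => /andP[tT0 tT] t_gt0.
have [n [n_ge n_le]] := level_count eta_gt0 (ltW t_gt0).
have cT : Num.max T1 T2 <= c * (t - eta) by rewrite mulrC -ler_pdivrMr //; lra.
move: cT; rewrite ge_max => /andP[cT1 cT2].
apply: le_trans (window_sum_le_harmonic c_gt0 g1g g2g g_le_sum x1_lt0 x2_lt0
  T1_gt0 T2_gt0 sum1_le sum2_le cT1 cT2 n_ge) _.
rewrite lee_fin -mulrnA -mulr_natr.
have -> : expR (d * (t - eta)) = expR (d * t) * expR (- d * eta).
  by rewrite -expRD; congr expR; ring.
rewrite mulrDl expRD -mulrA ler_wpM2l ?expR_ge0 //; apply: le_trans (T0_le t tT0).
rewrite ler_wpM2l ?expR_ge0 // natrM -expr2 lerXn2r ?nnegrE //; last by rewrite mulrC.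
by rewrite addr_ge0 ?mulr_ge0 ?invr_ge0 ?ltW.
Qed.

End window.

Section birkhoff_sums.
Variables (R : realType) (S : countType) (P : S -> S -> bool).
Implicit Types (f g : (nat -> S) -> R) (w : seq S).

Definition sigma_bounded f (m M : R) := forall x, SigmaP P x -> m <= f x <= M.

Definition Swr f w : R := fine (Sw P f w).

Lemma sigma_boundedD f g m1 M1 m2 M2 : sigma_bounded f m1 M1 -> sigma_bounded g m2 M2 ->
  sigma_bounded (fun x => f x + g x)%R (m1 + m2) (M1 + M2).
Proof.
move=> f_bnd g_bnd x Px.
by have /andP[? ?] := f_bnd x Px; have /andP[? ?] := g_bnd x Px; rewrite !lerD.
Qed.

Lemma SigmaP_iter k x : SigmaP P x -> SigmaP P (iter k (@Defs.shift S) x).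
Proof. by move=> Px; elim: k => //= k IHk i; exact: IHk. Qed.

Lemma Sw_le_bound f M w : (forall x, SigmaP P x -> f x <= M) ->
  (Sw P f w <= (M * (size w)%:R)%:E)%E.
Proof.
move=> f_le; apply: ge_ereal_sup => _ [x [Px _] <-]; rewrite lee_fin.
have -> : M * (size w)%:R = \sum_(k < size w) M by rewrite sumr_const card_ord mulr_natr.
by apply: ler_sum => k _; apply/f_le/SigmaP_iter.
Qed.

Lemma Sw_ge_bound f m w x : cylinder P w x -> (forall x, SigmaP P x -> m <= f x) ->
  ((m * (size w)%:R)%:E <= Sw P f w)%E.
Proof.
move=> wx f_ge; apply: le_trans (ereal_sup_ubound _); last by exists x.
have -> : m * (size w)%:R = \sum_(k < size w) m by rewrite sumr_const card_ord mulr_natr.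
by rewrite lee_fin; apply: ler_sum => k _; apply/f_ge/SigmaP_iter; case: wx.
Qed.

Lemma Sw_empty f w : ~ (cylinder P w !=set0) -> Sw P f w = -oo%E.
Proof. by move=> /nonemptyPn empty; rewrite /Sw empty image_set0 ereal_sup0. Qed.

Lemma Sw_fin_num f m M w : cylinder P w !=set0 -> sigma_bounded f m M ->
  Sw P f w \is a fin_num.
Proof.
move=> [x wx] f_bnd; have := Sw_le_bound w (fun x Px => proj2 (andP (f_bnd x Px))).
by have := Sw_ge_bound wx (fun x Px => proj1 (andP (f_bnd x Px))); case: (Sw P f w).
Qed.

Lemma le_Sw f g w : (forall x, SigmaP P x -> f x <= g x) -> (Sw P f w <= Sw P g w)%E.
Proof.
move=> fg; apply: ge_ereal_sup => _ [x wx <-].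
apply: le_trans (ereal_sup_ubound _); last by exists x.
by rewrite lee_fin; apply: ler_sum => k _; apply/fg/SigmaP_iter; case: wx.
Qed.

Lemma Sw_add_le f g w : (Sw P (fun x => f x + g x)%R w <= Sw P f w + Sw P g w)%E.
Proof.
apply: ge_ereal_sup => _ [x wx <-].
by rewrite big_split EFinD /=; apply: leeD; apply: ereal_sup_ubound; exists x.
Qed.

Lemma Swr_comparable f g m M w : 0 < m ->
  (forall x, SigmaP P x -> m <= f x <= g x) -> (forall x, SigmaP P x -> g x <= M) ->
  cylinder P w !=set0 -> m / M * Swr g w <= Swr f w <= Swr g w.
Proof.
move=> m_gt0 fg gM [x wx]; have Px : SigmaP P x by case: wx.
have M_gt0 : 0 < M by have /andP[mf fg'] := fg x Px; have := gM x Px; lra.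
have f_bnd : sigma_bounded f m M.
  by move=> y Py; have /andP[mf fg'] := fg y Py; rewrite mf (le_trans fg') ?gM.
have g_bnd : sigma_bounded g m M.
  by move=> y Py; have /andP[mf fg'] := fg y Py; rewrite (le_trans mf) ?gM.
have ffin := Sw_fin_num (ex_intro _ x wx) f_bnd.
have gfin := Sw_fin_num (ex_intro _ x wx) g_bnd.
apply/andP; split; last by rewrite fine_le // le_Sw // => y /fg /andP[].
have g_le : Swr g w <= M * (size w)%:R.
  by rewrite -lee_fin fineK // Sw_le_bound // => y /g_bnd /andP[].
apply: le_trans (ler_wpM2l (divr_ge0 (ltW m_gt0) (ltW M_gt0)) g_le) _.
rewrite mulrA divfK ?gt_eqF // -lee_fin fineK //.
by apply: Sw_ge_bound wx _ => y /f_bnd /andP[].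
Qed.

Lemma Swr_add_le f g m1 M1 m2 M2 w : cylinder P w !=set0 ->
  sigma_bounded f m1 M1 -> sigma_bounded g m2 M2 ->
  Swr (fun x => f x + g x)%R w <= Swr f w + Swr g w.
Proof.
move=> ne f_bnd g_bnd; have := Sw_add_le f g w.
rewrite -(fineK (Sw_fin_num ne f_bnd)) -(fineK (Sw_fin_num ne g_bnd)).
by rewrite -(fineK (Sw_fin_num ne (sigma_boundedD f_bnd g_bnd))) -EFinD lee_fin.
Qed.

Lemma Swr_add_comparable f1 f2 m1 M1 m2 M2 : 0 < m1 -> 0 < m2 ->
    sigma_bounded f1 m1 M1 -> sigma_bounded f2 m2 M2 ->
  let f := (fun x => f1 x + f2 x)%R in
  exists2 c, 0 < c & forall w, cylinder P w !=set0 ->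
    [/\ c * Swr f w <= Swr f1 w <= Swr f w, c * Swr f w <= Swr f2 w <= Swr f w
      & Swr f w <= Swr f1 w + Swr f2 w].
Proof.
move=> m1_gt0 m2_gt0 f1_bnd f2_bnd f.
pose m := Num.min m1 m2; pose M := Num.max (M1 + M2) 1.
have m_gt0 : 0 < m by rewrite lt_min m1_gt0.
have f_le x : SigmaP P x -> f x <= M.
  by move/(sigma_boundedD f1_bnd f2_bnd)/andP => [_ f_le]; rewrite le_max f_le.
have [m_le1 m_le2] : m <= m1 /\ m <= m2 by rewrite !ge_min !lexx orbT.
have f_ge x : SigmaP P x -> m <= f1 x <= f x /\ m <= f2 x <= f x.
  move=> Px; have /andP[f1_ge _] := f1_bnd x Px; have /andP[f2_ge _] := f2_bnd x Px.
  split; apply/andP; split.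
  - exact: le_trans m_le1 f1_ge.
  - by rewrite /f lerDl (le_trans (ltW m2_gt0)).
  - exact: le_trans m_le2 f2_ge.
  - by rewrite /f lerDr (le_trans (ltW m1_gt0)).
exists (m / M); first by rewrite divr_gt0 // lt_max ltr01 orbT.
move=> w ne; split; last exact: Swr_add_le ne f1_bnd f2_bnd.
  by apply: Swr_comparable => // x /f_ge[].
by apply: Swr_comparable => // x /f_ge[].
Qed.

(* A word with an empty cylinder has [Sw = -oo] and so lies in no window. *)
Lemma induced_sum_window (eta : R) (phi p : (nat -> S) -> R) (C : set (seq S)) m M :
  sigma_bounded phi m M ->
  induced_sum P eta phi p C = window_sum (fun w => expeR (Sw P p w))
    (C `&` [set w | cylinder P w !=set0]) eta (Swr phi).
Proof.
move=> phi_bnd; apply/funext => t; rewrite /induced_sum /window_sum /window.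
congr esum; apply/seteqP; split => w /=.
  move=> [Cw [lt_Sw Sw_le]].
  have ne : cylinder P w !=set0.
    by apply: contrapT => /(Sw_empty phi) Sw_oo; rewrite Sw_oo in lt_Sw.
  by move: lt_Sw Sw_le; rewrite -(fineK (Sw_fin_num ne phi_bnd)) lte_fin lee_fin.
move=> [[Cw ne] [lt_Sw Sw_le]].
by rewrite -(fineK (Sw_fin_num ne phi_bnd)) lte_fin lee_fin.
Qed.

Lemma induced_pressure_window (eta : R) (phi p : (nat -> S) -> R) (C : set (seq S)) m M :
  sigma_bounded phi m M ->
  induced_pressure P eta phi p C = window_pressure (fun w => expeR (Sw P p w))
    (C `&` [set w | cylinder P w !=set0]) eta (Swr phi).
Proof. by move=> phi_bnd; rewrite /induced_pressure (induced_sum_window _ _ _ phi_bnd). Qed.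

Variables (eta : R) (p : (nat -> S) -> R) (C : set (seq S)).
Variables (phi1 phi2 : (nat -> S) -> R) (m1 M1 m2 M2 : R).
Hypotheses (eta_gt0 : 0 < eta) (m1_gt0 : 0 < m1) (m2_gt0 : 0 < m2).
Hypotheses (phi1_bnd : sigma_bounded phi1 m1 M1) (phi2_bnd : sigma_bounded phi2 m2 M2).

Lemma induced_pressureD_gtNy : (-oo < induced_pressure P eta phi1 p C)%E ->
  (-oo < induced_pressure P eta (fun x => phi1 x + phi2 x)%R p C)%E.
Proof.
have [c c_gt0 comp] := Swr_add_comparable m1_gt0 m2_gt0 phi1_bnd phi2_bnd.
rewrite (induced_pressure_window _ _ _ phi1_bnd).
rewrite (induced_pressure_window _ _ _ (sigma_boundedD phi1_bnd phi2_bnd)).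
by apply: (window_pressure_gt_Ny (fun w => expeR_ge0 _) eta_gt0 c_gt0) => w [_ /comp[]].
Qed.

Lemma induced_pressureD_le_harmonic (x1 x2 : R) : x1 < 0 -> x2 < 0 ->
  (induced_pressure P eta phi1 p C < x1%:E)%E ->
  (induced_pressure P eta phi2 p C < x2%:E)%E ->
  (induced_pressure P eta (fun x => phi1 x + phi2 x)%R p C <= (x1 * x2 / (x1 + x2))%:E)%E.
Proof.
have [c c_gt0 comp] := Swr_add_comparable m1_gt0 m2_gt0 phi1_bnd phi2_bnd.
rewrite (induced_pressure_window _ _ _ phi1_bnd) (induced_pressure_window _ _ _ phi2_bnd).
rewrite (induced_pressure_window _ _ _ (sigma_boundedD phi1_bnd phi2_bnd)).
by apply: (window_pressure_le_harmonic (fun w => expeR_ge0 _) eta_gt0 c_gt0);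
  move=> w [_ /comp[]].
Qed.

End birkhoff_sums.

Theorem proposition6p7 (R : realType) (S : countType) (P : S -> S -> bool)
    (p : (nat -> S) -> R) (C : set (seq S)) (eta : R)
    (phi1 phi2 : (nat -> S) -> R) :
  (forall w, C w -> admissible P w) ->
  0 < eta ->
  (exists m M : R, 0 < m /\ forall x, SigmaP P x -> (m <= phi1 x)%R /\ (phi1 x <= M)%R) ->
  (exists m M : R, 0 < m /\ forall x, SigmaP P x -> (m <= phi2 x)%R /\ (phi2 x <= M)%R) ->
  (-oo < induced_pressure P eta phi1 p C)%E -> (induced_pressure P eta phi1 p C < 0)%E ->
  (-oo < induced_pressure P eta phi2 p C)%E -> (induced_pressure P eta phi2 p C < 0)%E ->
  ((induced_pressure P eta phi1 p C)^-1 + (induced_pressure P eta phi2 p C)^-1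
     <= (induced_pressure P eta (fun x => phi1 x + phi2 x)%R p C)^-1)%E.
Proof.
move=> _ eta_gt0 [m1 [M1 [m1_gt0 phi1_bnd]]] [m2 [M2 [m2_gt0 phi2_bnd]]].
have {}phi1_bnd : sigma_bounded P phi1 m1 M1 by move=> x /phi1_bnd[-> ->].
have {}phi2_bnd : sigma_bounded P phi2 m2 M2 by move=> x /phi2_bnd[-> ->].
move=> P1_gtNy P1_lt0 P2_gtNy P2_lt0.
have [q1 E1 q1_lt0] := fin_lt0P P1_gtNy P1_lt0.
have [q2 E2 q2_lt0] := fin_lt0P P2_gtNy P2_lt0.
rewrite E1 E2; apply: (inve_harmonic_le q1_lt0 q2_lt0).
  exact: induced_pressureD_gtNy eta_gt0 m1_gt0 m2_gt0 phi1_bnd phi2_bnd P1_gtNy.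
apply: lee_scale_lt1 => l /andP[l_gt0 l_lt1].
have lq1_lt0 : l * q1 < 0 by rewrite pmulr_rlt0.
have lq2_lt0 : l * q2 < 0 by rewrite pmulr_rlt0.
have -> : l * (q1 * q2 / (q1 + q2)) = (l * q1) * (l * q2) / (l * q1 + l * q2).
  by field; rewrite !lt_eqF //; lra.
apply: (induced_pressureD_le_harmonic eta_gt0 m1_gt0 m2_gt0 phi1_bnd phi2_bnd
  lq1_lt0 lq2_lt0).
  by rewrite E1 lte_fin ltr_nMl.
by rewrite E2 lte_fin ltr_nMl.
Qed.
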